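(* Let $X$ be a finite set with $|X|\ge 3$ and $T\in B(X)$. (M1) If $\mathcal T$ is a minimal triplet cover for $T$, then $2\le\mu(\mathcal T)\le 5$. (M2) If $\mathcal T$ is a minimum triplet cover for $T$, then $2\le\mu(\mathcal T)\le 3$.
   Context: A binary phylogenetic $X$-tree is an unrooted tree whose leaf set is $X$ and all of whose non-leaf vertices are unlabelled of degree three; $B(X)$ is the set of such trees. Pairs in $\binom{X}{2}$ are written $ab$, triples $abc$. Given $\mathcal T\subseteq\binom{X}{2}$, a triple $abc$ supports an interior vertex $v$ if $a,b,c$ lie one in each of the three components of $T$ minus $v$ and $ab,ac,bc\in\mathcal T$; $\mathcal T$ is a triplet cover for $T$ if every interior vertex is supported by some triple. A triplet cover is minimal if removing any single pair from it yields a set that is not a triplet cover for $T$, and minimum if no triplet cover for $T$ has smaller cardinality. The multiplicity $\mu_{\mathcal T}(x)$ of $x\in X$ is the number of elements of $\mathcal T$ containing $x$, and $\mu(\mathcal T)=\min\{\mu_{\mathcal T}(x):x\in X\}$. *)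

From mathcomp Require Import all_boot.
Set Implicit Arguments. Unset Strict Implicit. Unset Printing Implicit Defensive.

(* A binary phylogenetic X-tree is represented as a graph on the vertex type
   V := X + I, where the leaves are the vertices [inl x] (x : X) and the
   unlabelled interior vertices are the [inr i] (i : I). *)
Section Defs.
Variables (X I : finType).
Notation V := (X + I)%type.
Variable e : rel V.

Definition deg (v : V) : nat := #|[set w | e v w]|.

Definition acyclic : Prop :=
  ~ exists c : seq V, [/\ 3 <= size c, uniq c & cycle e c].

Definition binary_phylo_tree : Prop :=
  [/\ symmetric e, irreflexive e,
      (forall u v : V, connect e u v) & acyclic] /\
  ((forall x : X, deg (inl x) = 1) /\ (forall i : I, deg (inr i) = 3)).

Definition conn_minus (v : V) : rel V :=
  connect (fun a b => [&& e a b, a != v & b != v]).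

Definition separates (v : V) (a b c : X) : Prop :=
  [/\ ~~ conn_minus v (inl a) (inl b), ~~ conn_minus v (inl a) (inl c)
    & ~~ conn_minus v (inl b) (inl c)].

Definition supports (Tc : {set {set X}}) (a b c : X) (v : V) : Prop :=
  [/\ separates v a b c,
      [set a; b] \in Tc, [set a; c] \in Tc & [set b; c] \in Tc].

Definition triplet_cover (Tc : {set {set X}}) : Prop :=
  (forall p, p \in Tc -> #|p| = 2) /\
  (forall i : I, exists a b c, supports Tc a b c (inr i)).

Definition minimal_triplet_cover (Tc : {set {set X}}) : Prop :=
  triplet_cover Tc /\ (forall p, p \in Tc -> ~ triplet_cover (Tc :\ p)).

Definition minimum_triplet_cover (Tc : {set {set X}}) : Prop :=
  triplet_cover Tc /\ (forall Tc', triplet_cover Tc' -> #|Tc| <= #|Tc'|).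

End Defs.

Definition mult (X : finType) (Tc : {set {set X}}) (x : X) : nat :=
  #|[set p in Tc | x \in p]|.

(* mu(Tc) = min_x mult Tc x  (X nonempty); lo <= mu(Tc) <= hi unfolds to: *)
Definition mu_between (X : finType) (Tc : {set {set X}}) (lo hi : nat) : Prop :=
  (forall x : X, lo <= mult Tc x) /\ (exists x : X, mult Tc x <= hi).

From mathcomp Require Import all_boot zify.
Set Implicit Arguments. Unset Strict Implicit. Unset Printing Implicit Defensive.

(* Orienting every edge towards a fixed leaf
   shows that a tree on V vertices has V - 1 edges, so a binary tree with n
   leaves has n - 2 interior vertices.  A minimal cover is the union of the
   three pairs of one supporting triple per interior vertex, hence has at most
   3(n - 2) pairs.  Fixing a leaf r, every interior vertex v is supported by a
   triple r, a, b with a and b leaves in the two branches at v not containing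
   r; these triples give a cover with at most n + (n - 2) pairs, which bounds
   a minimum cover.  Since the multiplicities add up to twice the number of
   pairs, some leaf has multiplicity at most 5, resp. 3.  Conversely, a leaf x
   hangs off an interior vertex v whose other two branches cannot hold three
   separated leaves, so every triple supporting v contains x. *)

Section DeleteVertex.
Variables (T : finType) (f : rel T).

Definition del_vertex (u : T) : rel T := fun a b => [&& f a b, a != u & b != u].

Lemma del_vertex_sym u : symmetric f -> symmetric (del_vertex u).
Proof. by move=> f_sym a b; rewrite /del_vertex f_sym [(a != u) && _]andbC. Qed.

Lemma path_del_vertex_notin u x p : path (del_vertex u) x p -> u \notin p.
Proof.
elim: p x => [|b p IH] x //= /andP[/and3P[_ _ bu] /IH].
by rewrite inE negb_or eq_sym bu.
Qed.

Lemma connect_del_vertex_to u a : connect (del_vertex u) a u -> a = u.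
Proof.
case/connectP=> p /path_del_vertex_notin up ua.
by move: (mem_last a p); rewrite -ua inE (negbTE up) orbF => /eqP.
Qed.

Lemma connect_only_nbr u v z :
  (forall w, f u w -> w = v) -> connect (del_vertex v) u z -> z = u.
Proof.
move=> nbr /connectP[[|b p] /=]; first by move=> _ ->.
by case/andP=> /and3P[/nbr-> _]; rewrite eqxx.
Qed.

Lemma connect_last_edge u z :
  connect f z u -> z != u -> exists2 w, f w u & connect (del_vertex u) z w.
Proof.
case/connectP=> p; elim: p z => [|b p IH] z /=; first by move=> _ ->; rewrite eqxx.
case/andP=> fzb bp ub zu; have [bu|bu] := eqVneq b u.
  by exists z; [rewrite -bu | apply: connect0].
have [w fwu bw] := IH b bp ub bu; exists w => //.
by apply: connect_trans bw; apply: connect1; rewrite /del_vertex fzb zu bu.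
Qed.

Lemma connect_del_vertex u x y :
  connect f x y -> ~~ connect f u y -> connect (del_vertex u) x y.
Proof.
case/connectP=> p; elim: p x => [|b p IH] x /=; first by move=> _ -> _; apply: connect0.
case/andP=> fxb bp yb uy.
have xu : x != u.
  by apply: contraNneq uy => <-; apply/connectP; exists (b :: p) => //=; rewrite fxb.
apply: connect_trans (IH b bp yb uy); apply: connect1; rewrite /del_vertex fxb xu.
by apply: contraNneq uy => <-; apply/connectP; exists p.
Qed.

End DeleteVertex.

Lemma connect_del_del (T : finType) (f : rel T) u v x y :
  connect (del_vertex (del_vertex f u) v) x y -> connect (del_vertex f v) x y.
Proof. by apply: connect_sub => a b /and3P[/and3P[fab _ _] av bv]; apply/connect1/and3P. Qed.

Lemma sum_card_rel (A B : finType) (R : A -> B -> bool) :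
  \sum_a #|[set b | R a b]| = \sum_b #|[set a | R a b]|.
Proof.
have cardE (C : finType) (P : pred C) : #|[set c | P c]| = \sum_c P c.
  by rewrite -sum1dep_card big_mkcond; apply: eq_bigr => c _; case: (P c).
rewrite (eq_bigr _ (fun a _ => cardE _ _)) exchange_big.
by apply: eq_bigr => b _; rewrite cardE.
Qed.

Lemma three_in_pair (T : finType) (A : {set T}) x y z :
  #|A| <= 2 -> x \in A -> y \in A -> z \in A -> [|| x == y, x == z | y == z].
Proof.
move=> A2 xA yA zA; apply/negPn/negP; rewrite !negb_or => /and3P[xy xz yz].
have : x |: (y |: [set z]) \subset A.
  by apply/subsetP => u; rewrite !inE => /or3P[]/eqP->.
move/subset_leq_card/leq_trans/(_ A2).
by rewrite !cardsU1 cards1 !inE negb_or xy xz yz.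
Qed.

Section Tree.
Variables (T : finType) (e : rel T).
Hypotheses (e_sym : symmetric e) (e_irr : irreflexive e).
Hypothesis e_conn : forall u v, connect e u v.
Hypothesis e_acyclic : ~ exists c : seq T, [/\ 3 <= size c, uniq c & cycle e c].

Definition branch (v w : T) : {set T} := [set z | connect (del_vertex e v) w z].

Lemma connect_del_vertex_sym v : connect_sym (del_vertex e v).
Proof. exact/sym_connect_sym/del_vertex_sym. Qed.

Lemma branch_connect v w x y :
  x \in branch v w -> y \in branch v w -> connect (del_vertex e v) x y.
Proof. by rewrite !inE connect_del_vertex_sym; apply: connect_trans. Qed.

Lemma nbrs_not_connected v w1 w2 :
  e v w1 -> e v w2 -> w1 != w2 -> ~~ connect (del_vertex e v) w1 w2.
Proof.
move=> e1 e2 w12; apply/negP => /connectP[p pp].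
case: (shortenP pp) => p' pp' up' _ lst.
apply: e_acyclic; exists [:: v, w1 & p']; split.
- by case: p' {pp' up'} lst => [|a p'] //= lst; rewrite lst eqxx in w12.
- rewrite (cons_uniq v) up' andbT inE negb_or (path_del_vertex_notin pp') andbT.
  by apply: contraTneq e1 => ->; rewrite e_irr.
- rewrite /= e1 rcons_path -lst e_sym e2 andbT.
  by apply: sub_path pp' => a b /and3P[].
Qed.

Lemma branch_not_connected v w1 w2 x y : e v w1 -> e v w2 -> w1 != w2 ->
  x \in branch v w1 -> y \in branch v w2 -> ~~ connect (del_vertex e v) x y.
Proof.
move=> e1 e2 w12; rewrite !inE => w1x w2y.
apply: contraNN (nbrs_not_connected e1 e2 w12) => xy.
by apply: connect_trans w1x (connect_trans xy _); rewrite connect_del_vertex_sym.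
Qed.

Lemma mem_branch_nbr v z : z != v -> exists2 w, e v w & z \in branch v w.
Proof.
move=> zv; have [w ewv zw] := connect_last_edge (e_conn z v) zv.
by exists w; [rewrite e_sym | rewrite inE connect_del_vertex_sym].
Qed.

Lemma branch_proper v w w' :
  e v w -> e w w' -> w' != v -> branch w w' \proper branch v w.
Proof.
move=> evw eww' w'v; apply/properP; split; last first.
  exists w; rewrite !inE ?connect0 //; apply: contraTN eww' => /connect_del_vertex_to->.
  by rewrite e_irr.
apply/subsetP => z; rewrite !inE => w'z.
have vz : ~~ connect (del_vertex e w) v z.
  apply: contraNN (nbrs_not_connected (_ : e w v) eww' (_ : v != w')) => [vz||].
  - by apply: connect_trans vz _; rewrite connect_del_vertex_sym.
  - by rewrite e_sym.
  - by rewrite eq_sym.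
apply: connect_trans (connect_del_del (connect_del_vertex w'z vz)).
apply: connect1; rewrite /del_vertex eww' w'v andbT.
by apply: contraTneq evw => ->; rewrite e_irr.
Qed.

Lemma branch_edge_disjoint u w z :
  e u w -> z \in branch u w -> z \in branch w u -> False.
Proof.
move=> euw zuw; have zu : z != u.
  apply: contraTneq zuw => ->; rewrite inE; apply/negP => /connect_del_vertex_to wu.
  by rewrite wu e_irr in euw.
rewrite inE connect_del_vertex_sym => /connect_last_edge/(_ zu)[w' /and3P[ew'u w'w _] zw'].
have zuw' : z \in branch u w' by rewrite inE connect_del_vertex_sym (connect_del_del zw').
have w'u : e u w' by rewrite e_sym.
rewrite eq_sym in w'w; case/negP: (branch_not_connected euw w'u w'w zuw zuw').
exact: connect0.
Qed.

Section Rooted.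
Variable r : T.

Definition parent (u w : T) : bool := e u w && (r \in branch u w).

Lemma parent_root w : parent r w = false.
Proof.
apply/negP => /andP[erw]; rewrite inE => /connect_del_vertex_to wr.
by rewrite wr e_irr in erw.
Qed.

Lemma parent_exists u : u != r -> exists w, parent u w.
Proof.
by rewrite eq_sym => /mem_branch_nbr[w euw rw]; exists w; apply/andP.
Qed.

Lemma parent_uniq u w1 w2 : parent u w1 -> parent u w2 -> w1 = w2.
Proof.
case/andP=> e1 r1 /andP[e2 r2]; apply/eqP.
apply: contraTT (connect0 (del_vertex e u) r) => w12.
exact: branch_not_connected e1 e2 w12 r1 r2.
Qed.

Lemma parent_asym u w : parent u w -> parent w u -> False.
Proof. by case/andP=> euw ruw /andP[_]; apply: branch_edge_disjoint euw ruw. Qed.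

Lemma parent_total u w : e u w -> parent u w || parent w u.
Proof.
move=> euw; rewrite /parent euw e_sym euw /=.
have [->|ur] := eqVneq u r; first by rewrite orbC inE connect0.
have [p /andP[eup rp]] := parent_exists ur; have [<-|pw] := eqVneq p w; first by rewrite rp.
by rewrite (subsetP (proper_sub (branch_proper _ eup pw)) _ rp) ?orbT // e_sym.
Qed.

Lemma card_parents u : #|[set w | parent u w]| = (u != r).
Proof.
have [->|ur] := eqVneq u r.
  by apply/eqP; rewrite cards_eq0; apply/eqP/setP => w; rewrite !inE parent_root.
have [w0 p0] := parent_exists ur; rewrite (_ : [set w | parent u w] = [set w0]) ?cards1 //.
by apply/setP => w; rewrite !inE; apply/idP/eqP => [/parent_uniq/(_ p0)|->].
Qed.

Lemma card_nbrs_rooted u : #|[set w | e u w]| = (u != r) + #|[set w | parent w u]|.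
Proof.
have -> : [set w | e u w] = [set w | parent u w] :|: [set w | parent w u].
  apply/setP => w; rewrite !inE; apply/idP/idP => [/parent_total //|].
  by case/orP => /andP[] //; rewrite e_sym.
rewrite cardsU card_parents (_ : _ :&: _ = set0) ?cards0 ?subn0 //.
by apply/setP => w; rewrite !inE; apply/negP => /andP[]; apply: parent_asym.
Qed.

End Rooted.

Lemma sum_card_nbrs : \sum_u #|[set w | e u w]| = 2 * #|T|.-1.
Proof.
case: (pickP (@predT T)) => [r _|T0]; last by rewrite big_pred0 // eq_card0.
under eq_bigr => u _ do rewrite (card_nbrs_rooted r).
rewrite big_split /= -sum_card_rel.
under [X in _ + X]eq_bigr => u _ do rewrite card_parents.
rewrite addnn -mul2n -(cardC1 r) -sum1_card [in RHS]big_mkcond /=.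
by congr (2 * _); apply: eq_bigr => u _; rewrite inE; case: (u != r).
Qed.

End Tree.

Section Multiplicity.
Variable X : finType.
Implicit Type Tc : {set {set X}}.

Lemma mult_ge2 Tc x y z :
  [set x; y] \in Tc -> [set x; z] \in Tc -> x != y -> y != z -> 2 <= mult Tc x.
Proof.
move=> xyT xzT xy yz.
have yxz : y \notin [set x; z] by rewrite !inE negb_or eq_sym xy.
have neq : [set x; y] != [set x; z] by apply: contraNneq yxz => <-; rewrite !inE eqxx orbT.
have : [set [set x; y]; [set x; z]] \subset [set p in Tc | x \in p].
  by apply/subsetP => p; rewrite !inE => /orP[]/eqP->; rewrite ?xyT ?xzT !inE eqxx.
by move/subset_leq_card; rewrite cards2 neq.
Qed.

Lemma sum_mult Tc : (forall p, p \in Tc -> #|p| = 2) -> \sum_x mult Tc x = 2 * #|Tc|.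
Proof.
move=> Tc2; rewrite (sum_card_rel (fun x p => (p \in Tc) && (x \in p))) (bigID (mem Tc)) /=.
rewrite [X in _ + X]big1 => [|p /negbTE pT]; last first.
  by apply/eqP; rewrite cards_eq0; apply/eqP/setP => x; rewrite !inE pT.
rewrite addn0 -sum1_card big_distrr /=; apply: eq_bigr => p pT.
by rewrite muln1 -(Tc2 p pT); apply: eq_card => x; rewrite inE pT.
Qed.

Lemma exists_mult_le Tc k : (forall p, p \in Tc -> #|p| = 2) ->
  2 * #|Tc| < k.+1 * #|X| -> exists x, mult Tc x <= k.
Proof.
move=> Tc2; rewrite -sum_mult // ltnNge => sum_lt.
apply/existsP; apply: contraR sum_lt => /existsPn mult_gt.
rewrite mulnC -sum_nat_const; apply: leq_sum => x _; rewrite ltnNge; exact: mult_gt.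
Qed.

End Multiplicity.

Section Covers.
Variables (X I : finType) (e : rel (X + I)).

Lemma separates_neq v a b c : separates e v a b c -> [/\ a != b, a != c & b != c].
Proof.
by case=> ab ac bc; split; [move: ab | move: ac | move: bc]; apply: contraNneq => ->;
  apply: connect0.
Qed.

Definition triangles (J : finType) (a b c : J -> X) : {set {set X}} :=
  [set [set a j; b j] | j : J] :|: [set [set a j; c j] | j : J]
    :|: [set [set b j; c j] | j : J].

Lemma triplet_cover_triangles (a b c : I -> X) :
  (forall i, separates e (inr i) (a i) (b i) (c i)) -> triplet_cover e (triangles a b c).
Proof.
move=> sep; split=> [p|i].
  rewrite !inE -orbA => /or3P[]/imsetP[i _ ->]; have [ab ac bc] := separates_neq (sep i);
  by rewrite cards2 ?ab ?ac ?bc.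
exists (a i), (b i), (c i); split; rewrite ?sep //; apply/setUP;
  [left; apply/setUP; left | left; apply/setUP; right | right]; by apply/imsetP; exists i.
Qed.

Lemma card_triangles (J : finType) (a b c : J -> X) : #|triangles a b c| <= 3 * #|J|.
Proof.
rewrite mulSnr mulSnr mul1n; apply: leq_trans (leq_card_setU _ _) _.
apply: leq_add; last exact: leq_imset_card.
by apply: leq_trans (leq_card_setU _ _) _; apply: leq_add; apply: leq_imset_card.
Qed.

Lemma triplet_cover_superset (A B : {set {set X}}) : triplet_cover e A -> A \subset B ->
  (forall p, p \in B -> #|p| = 2) -> triplet_cover e B.
Proof.
move=> [_ covA] AB B2; split=> // i; have [a [b [c [sep ab ac bc]]]] := covA i.
by exists a, b, c; split; rewrite // (subsetP AB).
Qed.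

Lemma card_minimal_cover Tc : minimal_triplet_cover e Tc -> #|Tc| <= 3 * #|I|.
Proof.
move=> [[Tc2 cov] Tc_min].
have /fin_all_exists[t tP] :
    forall i, exists t : X * X * X, supports e Tc t.1.1 t.1.2 t.2 (inr i).
  by move=> i; have [a [b [c abc]]] := cov i; exists (a, b, c).
set C := triangles (fun i => (t i).1.1) (fun i => (t i).1.2) (fun i => (t i).2).
have C_cov : triplet_cover e C by apply: triplet_cover_triangles => i; case: (tP i).
have C_sub : C \subset Tc.
  by apply/subsetP => p; rewrite !inE -orbA => /or3P[]/imsetP[i _ ->]; case: (tP i).
suff /subset_leq_card Tc_sub : Tc \subset C by apply: leq_trans Tc_sub (card_triangles _ _ _).
apply/subsetP => p pT; apply/negPn/negP => pC; apply: (Tc_min p pT).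
apply: triplet_cover_superset C_cov _ _ => [|q /setD1P[_ /Tc2] //].
apply/subsetP => q qC; rewrite !inE (subsetP C_sub q qC) andbT.
by apply: contraNneq pC => <-.
Qed.

End Covers.

Section BinaryTree.
Variables (X I : finType) (e : rel (X + I)).
Hypothesis e_tree : binary_phylo_tree e.
Hypothesis X_ge3 : 3 <= #|X|.

Let e_sym : symmetric e. Proof. by case: e_tree => [[]]. Qed.
Let e_irr : irreflexive e. Proof. by case: e_tree => [[]]. Qed.
Let e_conn : forall u v, connect e u v. Proof. by case: e_tree => [[]]. Qed.
Let e_acyclic : acyclic e. Proof. by case: e_tree => [[]]. Qed.
Let leaf_deg x : #|[set w | e (inl x) w]| = 1.
Proof. by case: e_tree => _ [leaf _]; apply: leaf. Qed.
Let interior_deg i : #|[set w | e (inr i) w]| = 3.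
Proof. by case: e_tree => _ [_ interior]; apply: interior. Qed.

Lemma card_interior : #|I| + 2 = #|X|.
Proof.
have := sum_card_nbrs e_sym e_irr e_conn e_acyclic.
rewrite big_sumType card_sum /=.
under eq_bigr => x _ do rewrite leaf_deg.
under [X in _ + X]eq_bigr => i _ do rewrite interior_deg.
rewrite !sum_nat_const !cardT -!cardT; lia.
Qed.

Lemma leaf_nbr_uniq x w w' : e (inl x) w -> e (inl x) w' -> w' = w.
Proof.
have /eqP/cards1P[w0 N] := leaf_deg x.
have nbr0 u : e (inl x) u -> u = w0 by move=> exu; apply/set1P; rewrite -N inE.
by move=> /nbr0-> /nbr0.
Qed.

Lemma leaf_nbr_interior x : exists i, e (inl x) (inr i).
Proof.
have /card_gt0P[[y|i]] : 0 < #|[set w | e (inl x) w]| by rewrite leaf_deg.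
  2: by rewrite inE; exists i.
rewrite inE => exy; exfalso.
have /subsetPn[z _ zxy] : ~~ ([set: X] \subset [set x; y]).
  apply: contraTN X_ge3 => /subset_leq_card; rewrite cardsT cards2 -leqNgt.
  by move/leq_trans; apply; case: (x != y).
have cl : closed e [pred u | (u == inl x) || (u == inl y)].
  apply: (intro_closed (sym_connect_sym e_sym)) => u w euw /orP[]/eqP ?; subst u.
    by rewrite inE /= (leaf_nbr_uniq exy euw) eqxx orbT.
  by rewrite inE /= (leaf_nbr_uniq (_ : e (inl y) (inl x)) euw) ?eqxx // e_sym.
have := closed_connect cl (e_conn (inl x) (inl z)).
rewrite !inE eqxx /= => /esym/orP[]/eqP[] zE; by rewrite zE !inE eqxx ?orbT in zxy.
Qed.

Lemma card_other_nbrs i w : e (inr i) w -> #|[set z | e (inr i) z] :\ w| = 2.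
Proof. by move=> eiw; move: (interior_deg i); rewrite (cardsD1 w) inE eiw => -[]. Qed.

Lemma branch_has_leaf v w : e v w -> exists x : X, inl x \in branch e v w.
Proof.
move=> evw; have [n lt_n] := ubnP #|branch e v w|.
elim: n v w evw lt_n => // n IH v w evw lt_n.
case: w evw lt_n => [x|i] evw lt_n; first by exists x; rewrite inE connect0.
have /card_gt0P[w' /setD1P[w'v]] : 0 < #|[set z | e (inr i) z] :\ v|.
  by rewrite card_other_nbrs // e_sym.
rewrite inE => eiw'; have sub := branch_proper e_sym e_irr e_acyclic evw eiw' w'v.
have [x xw'] := IH _ _ eiw' (leq_trans (proper_card sub) lt_n).
by exists x; apply: (subsetP (proper_sub sub)).
Qed.

Lemma separating_leaves r i : exists a b, separates e (inr i) r a b.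
Proof.
have [p eip rp] := mem_branch_nbr e_sym e_conn (isT : inl r != inr i).
have /eqP/cards2P[w1 [w2 [w12 N]]] := card_other_nbrs eip.
have other w : w \in [set w1; w2] -> e (inr i) w /\ p != w.
  by rewrite -N => /setD1P[wp]; rewrite inE eq_sym.
have [e1 pw1] := other w1 (setU11 _ _); have [e2 pw2] := other w2 (setU1r _ (set11 _)).
have [a aw1] := branch_has_leaf e1; have [b bw2] := branch_has_leaf e2.
have sep := branch_not_connected e_sym e_irr e_acyclic.
by exists a, b; split; [apply: sep eip e1 pw1 rp aw1 | apply: sep eip e2 pw2 rp bw2
  | apply: sep e1 e2 w12 aw1 bw2].
Qed.

Lemma separates_nbr_leaf x i a b c :
  e (inl x) (inr i) -> separates e (inr i) a b c -> [|| x == a, x == b | x == c].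
Proof.
move=> exi [ab ac bc]; apply/negPn/negP; rewrite !negb_or => /and3P[xa xb xc].
have other u : x != u ->
    exists2 w, w \in [set z | e (inr i) z] :\ inl x & inl u \in branch e (inr i) w.
  move=> xu; have [w eiw uw] := mem_branch_nbr e_sym e_conn (isT : inl u != inr i).
  exists w => //; rewrite !inE eiw andbT; apply: contraNneq xu => wx.
  by move: uw; rewrite wx inE => /(connect_only_nbr (fun _ => leaf_nbr_uniq exi))[->].
have [wa Na aw] := other a xa; have [wb Nb bw] := other b xb.
have [wc Nc cw] := other c xc.
have le2 : #|[set z | e (inr i) z] :\ inl x| <= 2 by rewrite card_other_nbrs // e_sym.
have conn := branch_connect e_sym.
case/or3P: (three_in_pair le2 Na Nb Nc) => /eqP eq_w.
- by case/negP: ab; apply: conn aw _; rewrite eq_w.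
- by case/negP: ac; apply: conn aw _; rewrite eq_w.
- by case/negP: bc; apply: conn bw _; rewrite eq_w.
Qed.

Lemma mult_cover_ge2 Tc x : triplet_cover e Tc -> 2 <= mult Tc x.
Proof.
case=> _ cov; have [i exi] := leaf_nbr_interior x.
have [a [b [c [sep ab ac bc]]]] := cov i; have [nab nac nbc] := separates_neq sep.
case/or3P: (separates_nbr_leaf exi sep) => /eqP->.
- exact: mult_ge2 ab ac nab nbc.
- by rewrite setUC in ab; apply: mult_ge2 ab bc _ nac; rewrite eq_sym.
- by rewrite setUC in ac; rewrite setUC in bc; apply: mult_ge2 ac bc _ nab; rewrite eq_sym.
Qed.

Lemma card_minimum_cover Tc : minimum_triplet_cover e Tc -> #|Tc| <= #|X| + #|I|.
Proof.
case=> _ Tc_min; have /card_gt0P[r _] : 0 < #|X| by apply: leq_trans X_ge3.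
have /fin_all_exists[t tP] : forall i, exists t : X * X, separates e (inr i) r t.1 t.2.
  by move=> i; have [a [b sep]] := separating_leaves r i; exists (a, b).
set C := triangles (fun=> r) (fun i => (t i).1) (fun i => (t i).2).
apply: leq_trans (Tc_min C (triplet_cover_triangles tP)) _.
have : C \subset [set [set r; x] | x : X] :|: [set [set (t i).1; (t i).2] | i : I].
  apply/subsetP => p; rewrite !inE -orbA => /or3P[]/imsetP[i _ ->]; apply/orP;
  by [left; apply: imset_f | left; apply: imset_f | right; apply: imset_f].
move/subset_leq_card/leq_trans; apply; apply: leq_trans (leq_card_setU _ _) _.
by apply: leq_add; apply: leq_imset_card.
Qed.

End BinaryTree.

Unset Implicit Arguments.

Theorem proposition2 (X I : finType) (e : rel (X + I)%type) :
  3 <= #|X| -> binary_phylo_tree e ->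
  (forall Tc : {set {set X}}, minimal_triplet_cover e Tc -> mu_between Tc 2 5) /\
  (forall Tc : {set {set X}}, minimum_triplet_cover e Tc -> mu_between Tc 2 3).
Proof.
move=> X_ge3 e_tree; have card_I := card_interior e_tree X_ge3.
have mu_le Tc k : triplet_cover e Tc -> 2 * #|Tc| < k.+1 * #|X| -> mu_between Tc 2 k.
  move=> cov; split=> [x|]; first exact: mult_cover_ge2 cov.
  by apply: exists_mult_le; case: cov.
split=> Tc Tc_opt; apply: mu_le (Tc_opt.1) _.
- by have := card_minimal_cover Tc_opt; lia.
- by have := card_minimum_cover e_tree X_ge3 Tc_opt; lia.
Qed.
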